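(* (Working in $\mathbf{ZF}$.) Let $X$ be a weakly normal generalized topological space such that $X_{top}$ is locally compact and not compact. Then: (i) the collection $\mathcal C_0=\{A\in\mathrm{Cl}_X: A\in\mathrm{Kc}_X\ \text{or}\ \forall B\in\mathrm{Cl}_X\,[B\subseteq X\setminus A\Rightarrow B\in\mathrm{Kc}_X]\}$ is a Wallman base for $X_{top}$ such that the Wallman space $\mathcal W(X,\mathcal C_0)$ is compact; (ii) if $\mathcal W(X,\mathcal C_0)^S$ denotes $\mathcal W(X,\mathcal C_0)$ equipped with the strongest generalized topology associated with $\mathrm{Cov}_X$, then the strict compactification $\mathcal W(X,\mathcal C_0)^S$ of $X$ is strictly equivalent with the Alexandroff strict compactification $\hat X$ of $X$.
   Context: A generalized topological space (gts) $(X,\mathrm{Op}_X,\mathrm{Cov}_X)$ is in the sense of Delfs–Knebusch ($\mathrm{Op}_X$ contains $\emptyset,X$, closed under finite unions and intersections; $\mathrm{Cov}_X$ a collection of families of open sets satisfying the Delfs–Knebusch axioms). $\mathrm{Cl}_X$ = complements of open sets; $X_{top}$ = $X$ with topology generated by $\mathrm{Op}_X$. $X$ is weakly normal if disjoint sets, each a singleton or in $\mathrm{Cl}_X$, lie in disjoint open sets. $\mathrm{Kc}_X$ = members of $\mathrm{Cl}_X$ compact in $X_{top}$. A Wallman base of a topological space $T$ is a closed base $\mathcal C$ (for each closed $A$ and $x\notin A$ some $C\in\mathcal C$ has $A\subseteq C\not\ni x$) that is closed under finite unions and intersections, such that for every $A$ which is a singleton or closed and every $x\notin A$ there is $C\in\mathcal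 C$ with $x\in C\subseteq T\setminus A$, and for disjoint $A_1,A_2\in\mathcal C$ there are $C_1,C_2\in\mathcal C$ with $C_1\cup C_2=T$, $A_i\cap C_i=\emptyset$. $\mathcal W(X,\mathcal C)$ is the set of ultrafilters (maximal filters) in $\mathcal C$ with closed base $\{[A]_{\mathcal C}:A\in\mathcal C\}$, $[A]_{\mathcal C}=\{p:A\in p\}$; it is regarded as a compactification of $X_{top}$ via $w(x)=\{A\in\mathcal C:x\in A\}$ (identify $x$ with $w(x)$). For a compactification $\alpha X$ of $X_{top}$ with topology $\tau$, the strongest generalized topology associated with $\mathrm{Cov}_X$ has open sets $\mathrm{Op}^S=\{V\in\tau:V\cap X\in\mathrm{Op}_X\}$ and admissible families $\mathrm{Cov}^S=\{\mathcal V\subseteq\mathrm{Op}^S:\{V\cap X:V\in\mathcal V\}\in\mathrm{Cov}_X\}$. The Alexandroff strict compactification is $\hat X=X\cup\{\infty\}$ ($\infty\notin X$) with $\mathrm{Op}_{\hat X}=\mathrm{Op}_X\cup\{\hat X\setminus C:C\in\mathrm{Kc}_X\}$ and $\mathrm{Cov}_{\hat X}=\{\mathcal U\subseteq\mathrm{Op}_{\hat X}:\{U\cap X:U\in\mathcal U\}\in\mathrm{Cov}_X\}$. Strict compactifications $(\alpha X,\alpha)$, $(\gamma X,\gamma)$ of $X$ are strictly equivalent if there is a bijection $h:\alpha X\to\gamma X$ with $h$ and $h^{-1}$ strictly continuous (preimages of admissible families are admissible) and $h\circ\alpha=\gamma$. *)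

From mathcomp Require Import all_boot.
From mathcomp Require Import boolp classical_sets.
From Stdlib Require Import List.


Unset Strict Implicit.
Unset Printing Implicit Defensive.

Local Open Scope classical_set_scope.

Definition bigU {T : Type} (F : set (set T)) : set T :=
  fun x => exists A, F A /\ A x.

Definition finite_family {T : Type} (F : set (set T)) : Prop :=
  exists l : list (set T), forall A, F A <-> List.In A l.

Definition is_singleton {T : Type} (A : set T) : Prop := exists x, A = [set x].

(** Delfs--Knebusch generalized topological space (axioms as in Piekosz). *)
Record is_gts {X : Type} (Op : set (set X)) (Cov : set (set (set X))) : Prop := {
  gts_Op0 : Op set0;
  gts_OpT : Op setT;
  gts_OpU : forall U V, Op U -> Op V -> Op (U `|` V);
  gts_OpI : forall U V, Op U -> Op V -> Op (U `&` V);
  gts_CovOp : forall UU, Cov UU -> UU `<=` Op;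
  gts_CovU : forall UU, Cov UU -> Op (bigU UU);
  gts_fin : forall UU, UU `<=` Op -> finite_family UU -> Cov UU;
  gts_restr : forall UU V, Cov UU -> Op V -> Cov ((fun U => U `&` V) @` UU);
  gts_trans : forall UU (VV : set X -> set (set X)), Cov UU ->
      (forall U, UU U -> Cov (VV U) /\ bigU (VV U) = U) ->
      Cov (fun W => exists U, UU U /\ VV U W);
  gts_refine : forall UU VV, UU `<=` Op -> Cov VV -> bigU UU = bigU VV ->
      (forall V, VV V -> exists U, UU U /\ V `<=` U) -> Cov UU;
  gts_reg : forall UU VV, UU `<=` Op -> Cov VV -> bigU UU = bigU VV ->
      (forall V, VV V -> Cov ((fun U => U `&` V) @` UU)) -> Cov UU
}.

Definition Cl {X : Type} (Op : set (set X)) : set (set X) := fun A => Op (~` A).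

(** Open sets of X_top: the topology generated by Op (unions of members of Op). *)
Definition top_open {X : Type} (Op : set (set X)) : set (set X) :=
  fun A => forall x, A x -> exists U, Op U /\ U x /\ U `<=` A.

Definition top_closed {T : Type} (opn : set (set T)) : set (set T) :=
  fun A => opn (~` A).

Definition compact_in {T : Type} (opn : set (set T)) (K : set T) : Prop :=
  forall F : set (set T), F `<=` opn -> K `<=` bigU F ->
    exists l : list (set T), (forall A, List.In A l -> F A) /\
      K `<=` (fun x => exists A, List.In A l /\ A x).

Definition locally_compact {T : Type} (opn : set (set T)) : Prop :=
  forall x, exists U K, opn U /\ U x /\ U `<=` K /\ compact_in opn K.

Definition weakly_normal {X : Type} (Op : set (set X)) : Prop :=
  forall A B, (is_singleton A \/ Cl Op A) -> (is_singleton B \/ Cl Op B) ->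
    A `&` B = set0 ->
    exists U V, Op U /\ Op V /\ A `<=` U /\ B `<=` V /\ U `&` V = set0.

Definition Kc {X : Type} (Op : set (set X)) : set (set X) :=
  fun A => Cl Op A /\ compact_in (top_open Op) A.

Definition C0 {X : Type} (Op : set (set X)) : set (set X) :=
  fun A => Cl Op A /\
    (Kc Op A \/ forall B, Cl Op B -> B `<=` ~` A -> Kc Op B).

Definition wallman_base {T : Type} (opn : set (set T)) (C : set (set T)) : Prop :=
  [/\ (forall A, C A -> top_closed opn A),
      (forall A x, top_closed opn A -> ~ A x ->
          exists D, C D /\ A `<=` D /\ ~ D x),
      [/\ C set0, C setT,
          (forall A B, C A -> C B -> C (A `|` B)) &
          (forall A B, C A -> C B -> C (A `&` B))],
      (forall A x, (is_singleton A \/ top_closed opn A) -> ~ A x ->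
          exists D, C D /\ D x /\ D `<=` ~` A) &
      (forall A1 A2, C A1 -> C A2 -> A1 `&` A2 = set0 ->
          exists C1 C2, [/\ C C1, C C2, C1 `|` C2 = setT,
                            A1 `&` C1 = set0 & A2 `&` C2 = set0])].

Definition Cfilter {T : Type} (C : set (set T)) (p : set (set T)) : Prop :=
  [/\ p `<=` C, (exists A, p A), ~ p set0,
      (forall A B, p A -> p B -> p (A `&` B)) &
      (forall A B, p A -> C B -> A `<=` B -> p B)].

Definition Cultrafilter {T : Type} (C : set (set T)) (p : set (set T)) : Prop :=
  Cfilter C p /\ (forall q, Cfilter C q -> p `<=` q -> q = p).

Definition wallman_pt {T : Type} (C : set (set T)) : Type :=
  {p : set (set T) | Cultrafilter C p}.

Definition wbase {T : Type} (C : set (set T)) (A : set T) : set (wallman_pt C) :=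
  fun p => proj1_sig p A.

Definition wallman_open {T : Type} (C : set (set T)) : set (set (wallman_pt C)) :=
  fun U => forall p, U p ->
    exists A, C A /\ ~ wbase C A p /\ ~` (wbase C A) `<=` U.

Definition wmap {T : Type} (C : set (set T)) (x : T) : set (set T) :=
  fun A => C A /\ A x.

(** V ∩ X, X identified with its image under w. *)
Definition wtrace {T : Type} (C : set (set T)) (V : set (wallman_pt C)) : set T :=
  fun x => exists p, V p /\ proj1_sig p = wmap C x.

(** Strongest generalized topology on W(X,C) associated with Cov_X. *)
Definition OpS {X : Type} (Op : set (set X)) (C : set (set X)) :
    set (set (wallman_pt C)) :=
  fun V => wallman_open C V /\ Op (wtrace C V).

Definition CovS {X : Type} (Op : set (set X)) (Cov : set (set (set X)))
    (C : set (set X)) : set (set (set (wallman_pt C))) :=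
  fun VV => VV `<=` OpS Op C /\ Cov ((fun V => wtrace C V) @` VV).

(** Alexandroff strict compactification: carrier option X, None = infinity. *)
Definition OpHat {X : Type} (Op : set (set X)) : set (set (option X)) :=
  fun U => (exists V, Op V /\ U = Some @` V) \/
           (exists K, Kc Op K /\ U = ~` (Some @` K)).

Definition CovHat {X : Type} (Op : set (set X)) (Cov : set (set (set X))) :
    set (set (set (option X))) :=
  fun UU => UU `<=` OpHat Op /\ Cov ((fun U => Some @^-1` U) @` UU).

Definition strictly_continuous {A B : Type} (CovA : set (set (set A)))
    (CovB : set (set (set B))) (f : A -> B) : Prop :=
  forall UU, CovB UU -> CovA ((fun U => f @^-1` U) @` UU).

(* The lattice C0 consists of the compact closed sets together with the closed
   sets whose complement is relatively compact, i.e. the traces on X of the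
   closed neighbourhoods of a point at infinity; non-compactness of X keeps the
   two kinds apart, and weak normality together with local compactness makes
   C0 a Wallman base. A C0-ultrafilter with a compact member has, by
   compactness, a common point x and is then w(x); otherwise all its members
   are neighbourhoods of infinity and it is the unique ultrafilter of those.
   Hence W(X, C0) is X plus one point, its open sets are those of the
   Alexandroff compactification, and since both strict topologies transport
   Cov_X along traces on X the identification is strictly bicontinuous. *)

From mathcomp Require Import all_boot.
From mathcomp Require Import boolp classical_sets.
From Stdlib Require Import List.

Set Implicit Arguments.
Unset Strict Implicit.
Local Open Scope classical_set_scope.

Lemma list_choice {A B : Type} (R : A -> B -> Prop) (l : list A) :
  (forall a, In a l -> exists b, R a b) ->
  exists lb : list B, (forall b, In b lb -> exists a, R a b) /\
    forall a, In a l -> exists b, In b lb /\ R a b.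
Proof.
elim: l => [|a l IH] Hl; first by exists nil.
have [b Rab] := Hl a (or_introl erefl).
have [lb [lbR lR]] := IH (fun a' la' => Hl a' (or_intror la')).
exists (b :: lb); split=> [b' [<-|lbb']|a' [<-|la']]; first by exists a.
- exact: lbR.
- by exists b; split; first left.
- by have [b' [? ?]] := lR a' la'; exists b'; split; first right.
Qed.

Lemma setI_closed_list {T : Type} (p : set (set T)) K (lB : list (set T)) :
  (forall A B, p A -> p B -> p (A `&` B)) -> p K -> (forall A, In A lB -> p A) ->
  p (K `&` (fun x => forall A, In A lB -> A x)).
Proof.
move=> pI pK; elim: lB => [|B lB IH] lBp.
  by rewrite (_ : _ `&` _ = K) //; apply/seteqP; split=> [x []|x Kx] //; split.
rewrite (_ : _ `&` _ = B `&` (K `&` (fun x => forall A, In A lB -> A x))).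
  by apply: pI; [apply: lBp; left | apply: IH => A lBA; apply: lBp; right].
apply/seteqP; split=> [x [Kx Bx]|x [Bx [Kx lBx]]].
  by split; [apply: Bx; left | split=> // A lBA; apply: Bx; right].
by split=> // A [<-|]; [| exact: lBx].
Qed.

Section CompactIn.
Variable T : Type.
Variable opn : set (set T).

Lemma compact_in_set0 : compact_in opn set0.
Proof. by move=> F _ _; exists nil; split=> [|x []]. Qed.

Lemma compact_in_setU A B :
  compact_in opn A -> compact_in opn B -> compact_in opn (A `|` B).
Proof.
move=> cA cB F Fopn AB_F.
have [lA [lAF A_lA]] := cA F Fopn (fun x Ax => AB_F x (or_introl Ax)).
have [lB [lBF B_lB]] := cB F Fopn (fun x Bx => AB_F x (or_intror Bx)).
exists (lA ++ lB); split=> [C lC|x ABx].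
  by case: (in_app_or _ _ _ lC) => [/lAF|/lBF].
have [C [lC Cx]] : exists C, (In C lA \/ In C lB) /\ C x.
  by case: ABx => [/A_lA|/B_lB] [C [lC Cx]]; exists C; split=> //; [left|right].
by exists C; split=> //; apply: in_or_app.
Qed.

Lemma compact_in_closed_subset B K :
  opn (~` B) -> compact_in opn K -> B `<=` K -> compact_in opn B.
Proof.
move=> oCB cK BK F Fopn B_F.
have [l [lFB K_l]] : exists l, (forall V, In V l -> (F `|` [set ~` B]) V) /\
    K `<=` (fun x => exists V, In V l /\ V x).
  apply: cK => [V [/Fopn //|->] //|x Kx].
  have [Bx|nBx] := pselect (B x); last by exists (~` B); split=> //; right.
  by have [V [FV Vx]] := B_F x Bx; exists V; split=> //; left.
exists (filter (fun V => `[< F V >]) l); split=> [V /filter_In [_ /asboolP] //|x Bx].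
have [V [lV Vx]] := K_l x (BK x Bx).
exists V; split=> //; apply/filter_In; split=> //; apply/asboolP.
by case: (lFB V lV) => // EV; move: Vx; rewrite EV.
Qed.

Lemma compact_in_image (S : Type) (opnS : set (set S)) (f : T -> S) K :
  (forall U, opnS U -> opn (f @^-1` U)) ->
  compact_in opn K -> compact_in opnS (f @` K).
Proof.
move=> f_cont cK F Fopn fK_F.
have [l [lF K_l]] : exists l, (forall V, In V l -> [set f @^-1` U | U in F] V) /\
    K `<=` (fun x => exists V, In V l /\ V x).
  apply: cK => [_ [U FU <-]|x Kx]; first exact/f_cont/Fopn.
  have [U [FU Ux]] := fK_F (f x) (imageP f Kx).
  by exists (f @^-1` U); split=> //; exists U.
have [lU [lUF lU_l]] := @list_choice _ _ (fun V U => F U /\ f @^-1` U = V) l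
  (fun V lV => let: ex_intro2 U FU e := lF V lV in ex_intro _ U (conj FU e)).
exists lU; split=> [U /lUF [V []] //|_ [x Kx <-]].
have [V [lV Vx]] := K_l x Kx.
have [U [lU_U [_ eV]]] := lU_l V lV.
by exists U; split=> //; rewrite -eV in Vx.
Qed.

Lemma compact_in_filter_meet (p : set (set T)) K :
  compact_in opn K -> p K -> (forall A, p A -> opn (~` A)) ->
  (forall A B, p A -> p B -> p (A `&` B)) -> ~ p set0 ->
  exists x, forall A, p A -> A x.
Proof.
move=> cK pK p_opn pI p0; apply: contrapT => no_meet.
have [l [lF K_l]] : exists l, (forall W, In W l -> [set ~` A | A in p] W) /\
    K `<=` (fun x => exists W, In W l /\ W x).
  apply: cK => [_ [A pA <-]|x _]; first exact: p_opn.
  have [A [pA nAx]] : exists A, p A /\ ~ A x.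
    apply: contrapT => nA; apply: no_meet; exists x => A pA.
    by apply: contrapT => nAx; apply: nA; exists A.
  by exists (~` A); split; first exists A.
have [lA [lAp lA_l]] := @list_choice _ _ (fun W A => p A /\ ~` A = W) l
  (fun W lW => let: ex_intro2 A pA e := lF W lW in ex_intro _ A (conj pA e)).
apply: p0; rewrite (_ : set0 = K `&` (fun x => forall A, In A lA -> A x)).
  by apply: setI_closed_list => // A /lAp [W []].
apply/seteqP; split=> // x [Kx lAx].
have [W [lW Wx]] := K_l x Kx.
have [A [lA_A [_ eW]]] := lA_l W lW.
by rewrite -eW in Wx; apply: Wx; apply: lAx.
Qed.

End CompactIn.

Section AlexandroffWallman.
Variable X : Type.
Variable Op : set (set X).
Hypothesis Op_set0 : Op set0.
Hypothesis Op_setT : Op setT.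
Hypothesis Op_setU : forall U V, Op U -> Op V -> Op (U `|` V).
Hypothesis Op_setI : forall U V, Op U -> Op V -> Op (U `&` V).
Hypothesis Op_wnormal : weakly_normal Op.
Hypothesis Op_lcompact : locally_compact (top_open Op).
Hypothesis Op_not_compact : ~ compact_in (top_open Op) setT.

Local Notation compact := (compact_in (top_open Op)).

Lemma top_open_Op U : Op U -> top_open Op U.
Proof. by move=> OU x Ux; exists U; do !split. Qed.

Lemma Cl_setC U : Op U -> Cl Op (~` U).
Proof. by rewrite /Cl setCK. Qed.

Lemma Cl_set0 : Cl Op set0.
Proof. by rewrite /Cl setC0. Qed.

Lemma Cl_setT : Cl Op setT.
Proof. by rewrite /Cl setCT. Qed.

Lemma Cl_setI A B : Cl Op A -> Cl Op B -> Cl Op (A `&` B).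
Proof. by rewrite /Cl setCI; apply: Op_setU. Qed.

Lemma Cl_setU A B : Cl Op A -> Cl Op B -> Cl Op (A `|` B).
Proof. by rewrite /Cl setCU; apply: Op_setI. Qed.

Lemma Kc_closed_subset B K : Cl Op B -> compact K -> B `<=` K -> Kc Op B.
Proof.
by move=> ClB cK BK; split=> //; apply: compact_in_closed_subset cK BK; exact: top_open_Op.
Qed.

Lemma compact_nbhd x : exists V K, [/\ Op V, V x, V `<=` K & compact K].
Proof.
have [U [K [oU [Ux [UK cK]]]]] := Op_lcompact x.
have [V [OV [Vx VU]]] := oU x Ux.
by exists V, K; split=> // y /VU /UK.
Qed.

Lemma compact_open_nbhd A :
  compact A -> exists P K, [/\ Op P, A `<=` P, P `<=` K & compact K].
Proof.
move=> cA.
pose F := [set W | Op W /\ exists K, W `<=` K /\ compact K].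
have [l [lF A_l]] : exists l, (forall W, In W l -> F W) /\
    A `<=` (fun x => exists W, In W l /\ W x).
  apply: cA => [W [/top_open_Op] //|x _].
  have [V [K [OV Vx VK cK]]] := compact_nbhd x.
  by exists V; split=> //; split=> //; exists K.
suff [P [[OP [K [PK cK]]] lP]] :
    exists P, F P /\ (fun x => exists W, In W l /\ W x) `<=` P.
  by exists P, K; split=> // x /A_l /lP.
elim: l lF {A_l} => [|W l IH] lF.
  exists set0; split=> [|x [? []] //].
  by split=> //; exists set0; split=> //; exact: compact_in_set0.
have [[OW [KW [WKW cKW]]] [P [[OP [K [PK cK]]] lP]]] :=
  (lF W (or_introl erefl), IH (fun W' lW' => lF W' (or_intror lW'))).
exists (W `|` P); split=> [|x [W' [[<-|lW'] W'x]]]; [split | left | right] => //.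
- by apply: Op_setU.
- by exists (KW `|` K); split=> [x [/WKW|/PK]|]; [left|right|apply: compact_in_setU].
- by apply: lP; exists W'.
Qed.

Lemma Kc_nbhd x U : Op U -> U x -> exists D, [/\ Kc Op D, D x & D `<=` U].
Proof.
move=> OU Ux.
have [V [K [OV Vx VK cK]]] := compact_nbhd x.
have [P [Q [_ [OQ [xP [VUQ PQ]]]]]] : exists P Q, Op P /\ Op Q /\
    [set x] `<=` P /\ ~` (V `&` U) `<=` Q /\ P `&` Q = set0.
  apply: Op_wnormal; [by left; exists x | by right; apply: Cl_setC; apply: Op_setI |].
  by apply/seteqP; split=> // y [/= -> []].
have QVU : ~` Q `<=` V `&` U by apply: subsetCl.
exists (~` Q); split.
- by apply: Kc_closed_subset (Cl_setC OQ) cK _ => y /QVU [/VK].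
- move=> Qx; suff : (P `&` Q) x by rewrite PQ.
  by split=> //; exact: xP.
- by move=> y /QVU [].
Qed.

Definition cobounded (A : set X) := forall B, Cl Op B -> B `<=` ~` A -> Kc Op B.

Lemma cobounded_compl P K : P `<=` K -> compact K -> cobounded (~` P).
Proof.
move=> PK cK B ClB BP; apply: Kc_closed_subset ClB cK _ => x /BP.
by move=> /contrapT /PK.
Qed.

Lemma cobounded_sup A B : A `<=` B -> cobounded A -> cobounded B.
Proof. by move=> AB cobA E ClE EB; apply: cobA => // x /EB + /AB. Qed.

Lemma Kc_not_cobounded A : Kc Op A -> ~ cobounded A.
Proof.
move=> [_ cA] cobA.
have [P [K [OP AP PK cK]]] := compact_open_nbhd cA.
have [_ cCP] := cobA (~` P) (Cl_setC OP) (subsetC AP).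
apply: Op_not_compact; apply: compact_in_closed_subset (compact_in_setU cK cCP) _.
  by rewrite setCT; apply: top_open_Op.
by move=> x _; have [/PK|] := pselect (P x); [left | right].
Qed.

Lemma cobounded_setI A B : Cl Op A -> Cl Op B ->
  cobounded A -> cobounded B -> cobounded (A `&` B).
Proof.
move=> ClA ClB cobA cobB E ClE EAB.
have [P [Q [OP [OQ [EAP [EBQ PQ]]]]]] : exists P Q, Op P /\ Op Q /\
    E `&` A `<=` P /\ E `&` B `<=` Q /\ P `&` Q = set0.
  apply: Op_wnormal; [by right; apply: Cl_setI | by right; apply: Cl_setI |].
  by apply/seteqP; split=> // x [[Ex Ax] [_ Bx]]; apply: (EAB x Ex).
have [_ cEP] := cobA (E `&` ~` P) (Cl_setI ClE (Cl_setC OP))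
  (fun x '(conj Ex nPx) Ax => nPx (EAP x (conj Ex Ax))).
have [_ cEQ] := cobB (E `&` ~` Q) (Cl_setI ClE (Cl_setC OQ))
  (fun x '(conj Ex nQx) Bx => nQx (EBQ x (conj Ex Bx))).
apply: (Kc_closed_subset ClE (compact_in_setU cEP cEQ)) => x Ex.
have [Px|nPx] := pselect (P x); [right | by left].
by split=> // Qx; suff : (P `&` Q) x by rewrite PQ.
Qed.

Lemma C0_Kc A : Kc Op A -> C0 Op A.
Proof. by move=> KA; split; [case: KA | left]. Qed.

Lemma C0_cobounded A : Cl Op A -> cobounded A -> C0 Op A.
Proof. by move=> ClA cobA; split=> //; right. Qed.

Lemma C0_set0 : C0 Op set0.
Proof. by apply: C0_Kc; split; [exact: Cl_set0 | exact: compact_in_set0]. Qed.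

Lemma cobounded_setT : cobounded setT.
Proof.
by move=> B ClB BT; apply: (Kc_closed_subset ClB (@compact_in_set0 _ _)) => x /BT /(_ I).
Qed.

Lemma C0_setT : C0 Op setT.
Proof. exact: C0_cobounded Cl_setT cobounded_setT. Qed.

Lemma C0_setI A B : C0 Op A -> C0 Op B -> C0 Op (A `&` B).
Proof.
move=> [ClA [[_ cA]|cobA]] [ClB [[_ cB]|cobB]]; have ClAB := Cl_setI ClA ClB.
- by apply/C0_Kc/(Kc_closed_subset ClAB cA) => x [].
- by apply/C0_Kc/(Kc_closed_subset ClAB cA) => x [].
- by apply/C0_Kc/(Kc_closed_subset ClAB cB) => x [].
- by apply: C0_cobounded ClAB (cobounded_setI ClA ClB cobA cobB).
Qed.

Lemma C0_setU A B : C0 Op A -> C0 Op B -> C0 Op (A `|` B).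
Proof.
move=> [ClA [[_ cA]|cobA]] [ClB [[_ cB]|cobB]]; have ClAB := Cl_setU ClA ClB.
- by apply: C0_Kc; split=> //; apply: compact_in_setU.
- by apply: C0_cobounded ClAB (cobounded_sup _ cobB) => x; right.
- by apply: C0_cobounded ClAB (cobounded_sup _ cobA) => x; left.
- by apply: C0_cobounded ClAB (cobounded_sup _ cobA) => x; left.
Qed.

Lemma C0_open_shrink A P : C0 Op A -> Op P -> A `<=` P ->
  exists P', [/\ Op P', A `<=` P', P' `<=` P & C0 Op (~` P')].
Proof.
move=> [ClA [[_ cA]|cobA]] OP AP.
- have [P0 [K [OP0 AP0 P0K cK]]] := compact_open_nbhd cA.
  exists (P `&` P0); split=> [||x []|]; first exact: Op_setI.
  + by move=> x Ax; split; [exact: AP | exact: AP0].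
  + by [].
  apply: C0_cobounded; first by apply/Cl_setC/Op_setI.
  by apply: (cobounded_compl _ cK) => x [_ /P0K].
- exists P; split=> //; apply/C0_Kc/cobA; first exact: Cl_setC.
  by move=> x nPx /AP.
Qed.

Lemma C0_avoid_nbhd x U : Op U -> U x ->
  exists D, [/\ C0 Op D, cobounded D, ~ D x & ~` U `<=` D].
Proof.
move=> OU Ux.
have [V [K [OV Vx VK cK]]] := compact_nbhd x.
have cobD : cobounded (~` (V `&` U)) by apply: (cobounded_compl _ cK) => y [/VK].
exists (~` (V `&` U)); split=> [||/(_ (conj Vx Ux))//|y nUy [_ /nUy]//] //.
by apply: C0_cobounded cobD; apply/Cl_setC/Op_setI.
Qed.

Lemma Op_nbhd_avoid A x : is_singleton A \/ top_closed (top_open Op) A -> ~ A x ->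
  exists U, [/\ Op U, U x & U `<=` ~` A].
Proof.
case=> [[y ->]|clA] nAx; last first.
  by have [U [OU [Ux UA]]] := clA x nAx; exists U.
have xy0 : [set x] `&` [set y] = set0.
  by apply/seteqP; split=> // z [/= -> xy]; apply: nAx.
have [P [Q [OP [_ [xP [yQ PQ]]]]]] :=
  Op_wnormal (or_introl (ex_intro _ x erefl)) (or_introl (ex_intro _ y erefl)) xy0.
exists P; split=> [//||z Pz /= zy]; first exact: xP.
suff : (P `&` Q) z by rewrite PQ.
by split=> //; rewrite zy; apply: yQ.
Qed.

Lemma wallman_base_C0 : wallman_base (top_open Op) (C0 Op).
Proof.
split.
- by move=> A [ClA _]; exact: top_open_Op.
- move=> A x clA nAx.
  have [U [OU [Ux UA]]] := clA x nAx.
  have [D [C0D _ nDx UD]] := C0_avoid_nbhd OU Ux.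
  by exists D; split=> //; split=> [y Ay|//]; apply: UD => /UA.
- by split; [exact: C0_set0 | exact: C0_setT | exact: C0_setU | exact: C0_setI].
- move=> A x sclA nAx.
  have [U [OU Ux UA]] := Op_nbhd_avoid sclA nAx.
  have [D [KD Dx DU]] := Kc_nbhd OU Ux.
  by exists D; split; [exact: C0_Kc | split=> // y /DU /UA].
- move=> A1 A2 C0A1 C0A2 A12.
  have [P [Q [OP [OQ [A1P [A2Q PQ]]]]]] :=
    Op_wnormal (or_intror (proj1 C0A1)) (or_intror (proj1 C0A2)) A12.
  have [P' [OP' A1P' P'P C0P']] := C0_open_shrink C0A1 OP A1P.
  have [Q' [OQ' A2Q' Q'Q C0Q']] := C0_open_shrink C0A2 OQ A2Q.
  exists (~` P'), (~` Q'); split=> //.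
  + apply/seteqP; split=> // x _; have [P'x|nP'x] := pselect (P' x); [right | by left].
    move=> Q'x; suff : (P `&` Q) x by rewrite PQ.
    by split; [exact: P'P | exact: Q'Q].
  + by apply/seteqP; split=> // x [/A1P'].
  + by apply/seteqP; split=> // x [/A2Q'].
Qed.

Definition infty_filter : set (set X) := [set A | C0 Op A /\ cobounded A].

Lemma Cfilter_wmap x : Cfilter (C0 Op) (wmap (C0 Op) x).
Proof.
split=> [A []//||[]//|A B [C0A Ax] [C0B Bx]|A B [C0A Ax] C0B AB].
- by exists setT; split=> //; exact: C0_setT.
- by split; [exact: C0_setI | split].
- by split=> //; exact: AB.
Qed.

Lemma Cfilter_infty : Cfilter (C0 Op) infty_filter.
Proof.
split=> [A []//||[_]|A B [C0A cobA] [C0B cobB]|A B [C0A cobA] C0B AB].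
- by exists setT; split; [exact: C0_setT | exact: cobounded_setT].
- by apply: Kc_not_cobounded; split; [exact: Cl_set0 | exact: compact_in_set0].
- split; first exact: C0_setI.
  by apply: cobounded_setI; [case: C0A | case: C0B | |].
- by split=> //; exact: cobounded_sup cobA.
Qed.

Lemma C0_separate_point x A : C0 Op A -> ~ A x ->
  exists D, [/\ C0 Op D, D x & A `&` D = set0].
Proof.
move=> C0A nAx; have [_ _ _ sepC0 _] := wallman_base_C0.
have [D [C0D [Dx DA]]] := sepC0 A x (or_intror (top_open_Op (proj1 C0A))) nAx.
by exists D; split=> //; apply/seteqP; split=> // y [Ay /DA].
Qed.

Lemma Cultrafilter_wmap x : Cultrafilter (C0 Op) (wmap (C0 Op) x).
Proof.
split=> [|q [qC0 _ q0 qI _] xq]; first exact: Cfilter_wmap.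
apply/seteqP; split=> [A qA|//]; split; first exact: qC0.
apply: contrapT => nAx.
have [D [C0D Dx AD]] := C0_separate_point (qC0 A qA) nAx.
by apply: q0; rewrite -AD; apply: qI => //; apply: xq.
Qed.

Lemma Cultrafilter_infty : Cultrafilter (C0 Op) infty_filter.
Proof.
split=> [|q [qC0 _ q0 qI _] inftyq]; first exact: Cfilter_infty.
apply/seteqP; split=> [A qA|//].
have [ClA [[_ cA]|cobA]] := qC0 A qA; last by split=> //; exact: qC0.
have [P [K [OP AP PK cK]]] := compact_open_nbhd cA.
have qCP : q (~` P).
  have cobCP := cobounded_compl PK cK.
  by apply: inftyq; split=> //; apply: C0_cobounded cobCP; exact: Cl_setC.
exfalso; apply: q0; rewrite (_ : set0 = A `&` ~` P); first exact: qI.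
by apply/seteqP; split=> // y [/AP].
Qed.

Lemma Cultrafilter_C0E p : Cultrafilter (C0 Op) p ->
  p = infty_filter \/ exists x, p = wmap (C0 Op) x.
Proof.
move=> [[pC0 _ p0 pI _] pmax].
have [[A [pA [_ cA]]]|noKc] := pselect (exists A, p A /\ Kc Op A).
  have [x px] := compact_in_filter_meet cA pA
    (fun B pB => top_open_Op (proj1 (pC0 B pB))) pI p0.
  right; exists x; apply/esym/pmax; first exact: Cfilter_wmap.
  by move=> B pB; split; [exact: pC0 | exact: px].
left; apply/esym/pmax; first exact: Cfilter_infty.
move=> A pA; have [ClA [KA|cobA]] := pC0 A pA; last by split=> //; exact: pC0.
by case: noKc; exists A.
Qed.

Lemma wmap_inj : injective (wmap (C0 Op)).
Proof.
move=> x y wxy; apply: contrapT => nxy.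
have [_ _ _ sepC0 _] := wallman_base_C0.
have [D [C0D [Dx Dny]]] := sepC0 [set y] x (or_introl (ex_intro _ y erefl)) nxy.
suff [_ Dy] : wmap (C0 Op) y D by exact: Dny y Dy erefl.
by rewrite -wxy.
Qed.

Lemma wmap_neq_infty x : wmap (C0 Op) x <> infty_filter.
Proof.
move=> wx_infty.
have [D [KD Dx _]] := Kc_nbhd Op_setT (I : setT x).
suff [_ /(Kc_not_cobounded KD)] : infty_filter D by [].
by rewrite -wx_infty; split=> //; exact: C0_Kc.
Qed.

Local Notation Wpt := (wallman_pt (C0 Op)).

Definition wpt x : Wpt := exist _ (wmap (C0 Op) x) (Cultrafilter_wmap x).

Definition wpt_infty : Wpt := exist _ infty_filter Cultrafilter_infty.

Lemma wallman_pt_inj (p q : Wpt) : proj1_sig p = proj1_sig q -> p = q.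
Proof. by case: p q => [p Up] [q Uq] /= pq; subst q; rewrite (Prop_irrelevance Up Uq). Qed.

Lemma wallman_ptE (p : Wpt) : p = wpt_infty \/ exists x, p = wpt x.
Proof.
have [p_infty|[x px]] := Cultrafilter_C0E (proj2_sig p).
  by left; apply: wallman_pt_inj.
by right; exists x; apply: wallman_pt_inj.
Qed.

Definition of_alexandroff (o : option X) : Wpt :=
  if o is Some x then wpt x else wpt_infty.

Definition to_alexandroff (p : Wpt) : option X :=
  match pselect (exists x, p = wpt x) with
  | left ex_x => Some (proj1_sig (cid ex_x))
  | right _ => None
  end.

Lemma to_alexandroff_wpt x : to_alexandroff (wpt x) = Some x.
Proof.
rewrite /to_alexandroff; case: pselect => [ex_x|]; last by case; exists x.
by case: cid => y /= /(congr1 (@proj1_sig _ _)) /wmap_inj ->.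
Qed.

Lemma to_alexandroff_infty : to_alexandroff wpt_infty = None.
Proof.
rewrite /to_alexandroff; case: pselect => // -[x infty_x].
by exfalso; apply: (@wmap_neq_infty x); rewrite -[RHS]/(proj1_sig wpt_infty) infty_x.
Qed.

Lemma to_alexandroffK : cancel to_alexandroff of_alexandroff.
Proof.
move=> p; have [->|[x ->]] := wallman_ptE p.
  by rewrite to_alexandroff_infty.
by rewrite to_alexandroff_wpt.
Qed.

Lemma of_alexandroffK : cancel of_alexandroff to_alexandroff.
Proof. by case=> [x|]; [exact: to_alexandroff_wpt | exact: to_alexandroff_infty]. Qed.

Lemma wpt_continuous U : wallman_open (C0 Op) U -> top_open Op (wpt @^-1` U).
Proof.
move=> oU x Ux; have [A [C0A [nAx AU]]] := oU _ Ux.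
exists (~` A); split; first by case: C0A.
by split=> [Ax|y nAy]; [apply: nAx | apply: AU => -[_ /nAy]].
Qed.

Lemma wallman_compact : compact_in (wallman_open (C0 Op)) setT.
Proof.
move=> F Fopn cover.
have [U0 [FU0 U0infty]] := cover wpt_infty I.
have [A [C0A [nA AU0]]] := Fopn U0 FU0 wpt_infty U0infty.
have cA : compact A by have [_ [[]//|cobA]] := C0A; exfalso; apply: nA.
have [l [lF A_l]] :=
  compact_in_image wpt_continuous cA Fopn (fun p _ => cover p I).
exists (U0 :: l); split=> [U [<-|/lF] //|p _].
have [->|[x ->]] := wallman_ptE p; first by exists U0; split=> //; left.
have [Ax|nAx] := pselect (A x).
  by have [U [lU Ux]] := A_l _ (imageP wpt Ax); exists U; split=> //; right.
by exists U0; split; [left | apply: AU0 => -[_ /nAx]].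
Qed.

Lemma wtrace_wpt V : wtrace (C0 Op) V = wpt @^-1` V.
Proof.
apply/seteqP; split=> [x [p [Vp px]]|x Vx]; last by exists (wpt x).
change (V (wpt x)).
by have -> : wpt x = p by apply: wallman_pt_inj.
Qed.

Lemma wtrace_preimage_to_alexandroff U :
  wtrace (C0 Op) (to_alexandroff @^-1` U) = Some @^-1` U.
Proof.
rewrite wtrace_wpt; apply/seteqP; split=> x;
  by rewrite /preimage /= to_alexandroff_wpt.
Qed.

Lemma wallman_open_preimage_Some V :
  Op V -> wallman_open (C0 Op) (to_alexandroff @^-1` (Some @` V)).
Proof.
move=> OV p; have [->|[x ->]] := wallman_ptE p;
  rewrite /preimage /= ?to_alexandroff_infty ?to_alexandroff_wpt; first by case=> y _ [].
case=> y Vy [yx]; subst y; have [D [C0D cobD nDx VD]] := C0_avoid_nbhd OV Vy.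
exists D; split=> //; split=> [[_ /nDx] //|q nDq].
have [qinfty|[y qy]] := wallman_ptE q; first by case: nDq; rewrite qinfty.
rewrite qy /= to_alexandroff_wpt; exists y => //.
by apply: contrapT => nVy; apply: nDq; rewrite qy; split=> //; apply: VD.
Qed.

Lemma wallman_open_preimage_compl K :
  Kc Op K -> wallman_open (C0 Op) (to_alexandroff @^-1` (~` (Some @` K))).
Proof.
move=> KK p nKp; exists K; split; first exact: C0_Kc.
split=> [|q].
  have [pinfty|[x px]] := wallman_ptE p; rewrite /wbase ?pinfty ?px /=.
    by move=> [_ /(Kc_not_cobounded KK)].
  by move=> [_ Kx]; apply: nKp; rewrite px /preimage to_alexandroff_wpt; exists x.
have [->|[y ->]] := wallman_ptE q => nKq;
  rewrite /preimage /= ?to_alexandroff_infty ?to_alexandroff_wpt; first by case=> z _ [].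
by move=> [z Kz [zy]]; apply: nKq; split; [exact: C0_Kc | rewrite /= -zy].
Qed.

Lemma OpS_preimage_to_alexandroff U :
  OpHat Op U -> OpS Op (C0 Op) (to_alexandroff @^-1` U).
Proof.
rewrite /OpS wtrace_preimage_to_alexandroff.
case=> [[V [OV ->]]|[K [KK ->]]].
  split; first exact: wallman_open_preimage_Some.
  by rewrite (_ : _ @^-1` _ = V) //; apply/seteqP; split=> [x [y Vy [<-]]|x Vx] //; exists x.
split; first exact: wallman_open_preimage_compl.
rewrite (_ : _ @^-1` _ = ~` K); first by case: KK.
apply/seteqP; split=> [x nKx Kx|x nKx [y Ky [yx]]]; apply: nKx; first by exists x.
by rewrite -yx.
Qed.

Lemma OpHat_preimage_of_alexandroff V :
  OpS Op (C0 Op) V -> OpHat Op (of_alexandroff @^-1` V).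
Proof.
move=> [oV Otr]; rewrite wtrace_wpt in Otr.
have [Vinfty|nVinfty] := pselect (V wpt_infty).
  have [A [C0A [nA AV]]] := oV wpt_infty Vinfty.
  have cA : compact A by have [_ [[]//|cobA]] := C0A; exfalso; apply: nA.
  right; exists (~` (wpt @^-1` V)); split.
    have ClK : Cl Op (~` (wpt @^-1` V)) by rewrite /Cl setCK.
    apply: Kc_closed_subset ClK cA _ => x nVx; apply: contrapT => nAx.
    by apply: nVx; apply: AV => -[_ /nAx].
  apply/seteqP; split=> -[x|] /= Vx.
  - by move=> [y nVy [yx]]; apply: nVy; rewrite yx.
  - by move=> [y _ []].
  - by apply: contrapT => nVx; apply: Vx; exists x.
  - exact: Vinfty.
left; exists (wpt @^-1` V); split=> //.
apply/seteqP; split=> -[x|] /= Vx.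
- by exists x.
- by case: nVinfty.
- by move: Vx => [y Vy [<-]].
- by move: Vx => [y _ []].
Qed.

Lemma to_alexandroff_strictly_continuous (Cov : set (set (set X))) :
  strictly_continuous (CovS Op Cov (C0 Op)) (CovHat Op Cov) to_alexandroff.
Proof.
move=> UU [UUop covUU]; split=> [_ [U UU_U <-]|].
  exact/OpS_preimage_to_alexandroff/UUop.
rewrite image_comp (_ : _ \o _ = fun U => Some @^-1` U) //.
by apply: funext => U; exact: wtrace_preimage_to_alexandroff.
Qed.

Lemma of_alexandroff_strictly_continuous (Cov : set (set (set X))) :
  strictly_continuous (CovHat Op Cov) (CovS Op Cov (C0 Op)) of_alexandroff.
Proof.
move=> VV [VVop covVV]; split=> [_ [V VV_V <-]|].
  exact/OpHat_preimage_of_alexandroff/VVop.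
rewrite image_comp (_ : _ \o _ = wtrace (C0 Op)) //.
by apply: funext => V; rewrite wtrace_wpt.
Qed.

Lemma wallman_alexandroff_strictly_equivalent (Cov : set (set (set X))) :
  exists (h : Wpt -> option X) (g : option X -> Wpt),
    [/\ cancel h g, cancel g h,
        strictly_continuous (CovS Op Cov (C0 Op)) (CovHat Op Cov) h,
        strictly_continuous (CovHat Op Cov) (CovS Op Cov (C0 Op)) g &
        forall x p, proj1_sig p = wmap (C0 Op) x -> h p = Some x].
Proof.
exists to_alexandroff, of_alexandroff; split.
- exact: to_alexandroffK.
- exact: of_alexandroffK.
- exact: to_alexandroff_strictly_continuous.
- exact: of_alexandroff_strictly_continuous.
- by move=> x p /(@wallman_pt_inj _ (wpt x)) ->; exact: to_alexandroff_wpt.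
Qed.

End AlexandroffWallman.

Theorem proposition7p14 (X : Type) (Op : set (set X)) (Cov : set (set (set X))) :
  is_gts Op Cov ->
  weakly_normal Op ->
  locally_compact (top_open Op) ->
  ~ compact_in (top_open Op) setT ->
  (* (i) *)
  (wallman_base (top_open Op) (C0 Op) /\
   (forall x, Cultrafilter (C0 Op) (wmap (C0 Op) x)) /\
   compact_in (wallman_open (C0 Op)) setT) /\
  (* (ii) *)
  (exists (h : wallman_pt (C0 Op) -> option X) (g : option X -> wallman_pt (C0 Op)),
     [/\ cancel h g, cancel g h,
         strictly_continuous (CovS Op Cov (C0 Op)) (CovHat Op Cov) h,
         strictly_continuous (CovHat Op Cov) (CovS Op Cov (C0 Op)) g &
         forall x p, proj1_sig p = wmap (C0 Op) x -> h p = Some x]).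
Proof.
move=> gts wnormal lcompact not_compact.
have [Op0 OpT OpU OpI _ _ _ _ _ _ _] := gts.
split; [split; [|split] |].
- exact: wallman_base_C0.
- exact: Cultrafilter_wmap.
- exact: wallman_compact.
- exact: wallman_alexandroff_strictly_equivalent.
Qed.
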